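(* In $\mathsf{HSLat}$, every sub-Heyting semilattice $X$ of a Heyting semilattice $A$ has a centraliser, namely $Z_A(X)=\{a\in A\mid (x\Rightarrow a)=a\text{ and }(a\Rightarrow x)=x\text{ for all }x\in X\}$; hence $\mathsf{HSLat}$ is algebraically cartesian closed. Moreover, if $X$ is a normal subobject of $A$, then $Z_A(X)$ is a normal subobject of $A$.
   Context: A Heyting semilattice is a meet-semilattice with top $1$ and an operation $\Rightarrow$ with $x\wedge y\le z$ iff $x\le y\Rightarrow z$; morphisms preserve $1,\wedge,\Rightarrow$. Subobjects $X,Y\le A$ Huq-commute if there is a morphism $\varphi\colon X\times Y\to A$ with $\varphi(x,1)=x$, $\varphi(1,y)=y$. The centraliser $Z_A(X)$ is the largest subobject of $A$ Huq-commuting with $X$. Normal subobjects of $A$ are kernels, which in $\mathsf{HSLat}$ are exactly the filters (non-empty, $\wedge$-closed, up-closed subsets). A semi-abelian category is algebraically cartesian closed iff centralisers of all subobjects exist. *)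

Record HSLat := {
  hs_carrier :> Type;
  hs_top : hs_carrier;
  hs_meet : hs_carrier -> hs_carrier -> hs_carrier;
  hs_imp : hs_carrier -> hs_carrier -> hs_carrier;
  hs_meetA : forall x y z, hs_meet x (hs_meet y z) = hs_meet (hs_meet x y) z;
  hs_meetC : forall x y, hs_meet x y = hs_meet y x;
  hs_meetxx : forall x, hs_meet x x = x;
  hs_meet1 : forall x, hs_meet x hs_top = x;
  (* x /\ y <= z  iff  x <= (y => z), with a <= b :<-> a /\ b = a *)
  hs_residuation : forall x y z,
      hs_meet (hs_meet x y) z = hs_meet x y <-> hs_meet x (hs_imp y z) = x
}.

Arguments hs_top {h}.
Arguments hs_meet {h}.
Arguments hs_imp {h}.

Definition hs_le {A : HSLat} (a b : A) : Prop := hs_meet a b = a.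

Definition is_subobject {A : HSLat} (X : A -> Prop) : Prop :=
  X hs_top /\
  (forall x y, X x -> X y -> X (hs_meet x y)) /\
  (forall x y, X x -> X y -> X (hs_imp x y)).

(* Huq-commutation: a morphism phi : X x Y -> A of Heyting semilattices
   (operations on X x Y componentwise; phi given as a function on A x A
   whose values outside X x Y are irrelevant) with phi(x,1)=x, phi(1,y)=y. *)
Definition huq_commute {A : HSLat} (X Y : A -> Prop) : Prop :=
  exists phi : A -> A -> A,
    phi hs_top hs_top = hs_top /\
    (forall x1 x2 y1 y2, X x1 -> X x2 -> Y y1 -> Y y2 ->
        phi (hs_meet x1 x2) (hs_meet y1 y2) = hs_meet (phi x1 y1) (phi x2 y2)) /\
    (forall x1 x2 y1 y2, X x1 -> X x2 -> Y y1 -> Y y2 ->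
        phi (hs_imp x1 x2) (hs_imp y1 y2) = hs_imp (phi x1 y1) (phi x2 y2)) /\
    (forall x, X x -> phi x hs_top = x) /\
    (forall y, Y y -> phi hs_top y = y).

Definition centraliser_set {A : HSLat} (X : A -> Prop) : A -> Prop :=
  fun a => forall x, X x -> hs_imp x a = a /\ hs_imp a x = x.

Definition is_centraliser {A : HSLat} (X Z : A -> Prop) : Prop :=
  is_subobject Z /\ huq_commute X Z /\
  (forall Y, is_subobject Y -> huq_commute X Y -> forall a, Y a -> Z a).

(* normal subobjects = filters *)
Definition is_filter {A : HSLat} (F : A -> Prop) : Prop :=
  (exists a, F a) /\
  (forall x y, F x -> F y -> F (hs_meet x y)) /\
  (forall x y, F x -> hs_le x y -> F y).

(* An element a commutes with X iff the map (x, a) |-> x /\ a preserves implication,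
   which unfolds to the two equations defining [centraliser_set X]: putting
   [x2 = y1 = 1] or [x1 = y2 = 1] in the implication law of any Huq-commutation
   witness yields exactly these equations, so the set is the largest candidate.
   That it is itself a sub-Heyting semilattice commuting with X via the meet is
   a computation with the Heyting identities [x => (y /\ z) = (x => y) /\ (x => z)]
   and [(x /\ y) => z = x => (y => z)]. For a filter X, the element
   [(x => b) => b] lies above [x], hence in X, which forces upward closure. *)

From Stdlib Require Import Setoid.

Section HeytingSemilattice.
Variable A : HSLat.
Local Notation "a <= b" := (@hs_le A a b).
Local Notation "a ∧ b" := (@hs_meet A a b) (at level 40, left associativity).
Local Notation "a ⇒ b" := (@hs_imp A a b) (at level 45, right associativity).
Local Notation "1" := (@hs_top A).

Lemma le_refl (a : A) : a <= a.
Proof. apply hs_meetxx. Qed.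

Lemma le_antisym (a b : A) : a <= b -> b <= a -> a = b.
Proof.
  unfold hs_le; intros Hab Hba.
  rewrite <- Hab, hs_meetC. exact Hba.
Qed.

Lemma le_trans (a b c : A) : a <= b -> b <= c -> a <= c.
Proof. unfold hs_le; intros Hab Hbc. rewrite <- Hab, <- hs_meetA, Hbc. reflexivity. Qed.

Lemma meet_lb1 (a b : A) : a ∧ b <= a.
Proof. unfold hs_le. rewrite (hs_meetC _ a b), <- hs_meetA, hs_meetxx. reflexivity. Qed.

Lemma meet_lb2 (a b : A) : a ∧ b <= b.
Proof. unfold hs_le. rewrite <- hs_meetA, hs_meetxx. reflexivity. Qed.

Lemma meet_glb (a b c : A) : c <= a -> c <= b -> c <= a ∧ b.
Proof. unfold hs_le; intros Hca Hcb. rewrite hs_meetA, Hca, Hcb. reflexivity. Qed.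

Lemma le_top (a : A) : a <= 1.
Proof. apply hs_meet1. Qed.

Lemma le_imp (c x y : A) : c ∧ x <= y <-> c <= x ⇒ y.
Proof. apply hs_residuation. Qed.

Lemma le_ext (a b : A) : (forall c, c <= a <-> c <= b) -> a = b.
Proof. intro H. apply le_antisym; apply H, le_refl. Qed.

Lemma top_le_eq (a : A) : 1 <= a -> a = 1.
Proof. intro H. apply le_antisym; [apply le_top | exact H]. Qed.

Lemma le_imp_r (x y : A) : y <= x ⇒ y.
Proof. apply le_imp, meet_lb1. Qed.

Lemma modus_ponens (x y : A) : x ∧ (x ⇒ y) <= y.
Proof. rewrite hs_meetC. apply le_imp, le_refl. Qed.

Lemma imp_eq_top (x y : A) : x <= y -> x ⇒ y = 1.
Proof. intro H. apply top_le_eq, le_imp. eapply le_trans; [apply meet_lb2 | exact H]. Qed.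

Lemma imp_top_eq (x y : A) : x ⇒ y = 1 -> x <= y.
Proof.
  intro H. assert (Htop : 1 <= x ⇒ y) by (rewrite H; apply le_refl).
  apply le_imp in Htop. rewrite hs_meetC, hs_meet1 in Htop. exact Htop.
Qed.

Lemma imp1 (x : A) : x ⇒ 1 = 1.
Proof. apply imp_eq_top, le_top. Qed.

Lemma top_imp (x : A) : 1 ⇒ x = x.
Proof. apply le_ext; intro c. rewrite <- le_imp. unfold hs_le. rewrite hs_meet1. tauto. Qed.

Lemma imp_meetr (x y z : A) : x ⇒ (y ∧ z) = (x ⇒ y) ∧ (x ⇒ z).
Proof.
  apply le_ext; intro c. rewrite <- le_imp.
  split; intro H.
  - apply meet_glb; apply le_imp; (eapply le_trans; [exact H |]);
      [apply meet_lb1 | apply meet_lb2].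
  - apply meet_glb; apply le_imp; (eapply le_trans; [exact H |]);
      [apply meet_lb1 | apply meet_lb2].
Qed.

Lemma imp_meetl (x y z : A) : (x ∧ y) ⇒ z = x ⇒ (y ⇒ z).
Proof. apply le_ext; intro c. rewrite <- !le_imp, hs_meetA. tauto. Qed.

Lemma imp_swap (x y z : A) : x ⇒ (y ⇒ z) = y ⇒ (x ⇒ z).
Proof. rewrite <- !imp_meetl, hs_meetC. reflexivity. Qed.

Lemma meet_le_compat (a b c : A) : a <= b -> c ∧ a <= c ∧ b.
Proof.
  intro H. apply meet_glb; [apply meet_lb1 |].
  eapply le_trans; [apply meet_lb2 | exact H].
Qed.

Lemma imp_le_antitone (a b x : A) : a <= b -> b ⇒ x <= a ⇒ x.
Proof.
  intro H. apply le_imp. eapply le_trans; [apply meet_le_compat, H |].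
  apply le_imp, le_refl.
Qed.

End HeytingSemilattice.

Section Centraliser.
Variables (A : HSLat) (X : A -> Prop).
Local Notation Z := (centraliser_set X).

Lemma centraliser_top : Z hs_top.
Proof. intros x _. split; [apply imp1 | apply top_imp]. Qed.

Lemma centraliser_meet a b : Z a -> Z b -> Z (hs_meet a b).
Proof.
  intros Ha Hb x Hx.
  destruct (Ha x Hx) as [Hxa Hax], (Hb x Hx) as [Hxb Hbx].
  split; [rewrite imp_meetr, Hxa, Hxb | rewrite imp_meetl, Hbx, Hax]; reflexivity.
Qed.

Lemma centraliser_imp a b : Z b -> Z (hs_imp a b).
Proof.
  intros Hb x Hx. destruct (Hb x Hx) as [Hxb Hbx]. split.
  - rewrite imp_swap, Hxb. reflexivity.
  - apply le_antisym; [| apply le_imp_r].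
    rewrite <- Hbx at 2. apply imp_le_antitone, le_imp_r.
Qed.

Lemma centraliser_subobject : is_subobject Z.
Proof.
  split; [apply centraliser_top |].
  split; [apply centraliser_meet |].
  intros a b _ Hb. apply centraliser_imp, Hb.
Qed.

Lemma huq_commute_centraliser :
  (forall x y, X x -> X y -> X (hs_imp x y)) -> huq_commute X Z.
Proof.
  intro Ximp. exists hs_meet. repeat split.
  - apply hs_meetxx.
  - intros x1 x2 a1 a2 _ _ _ _.
    rewrite !hs_meetA. f_equal. rewrite <- !hs_meetA. f_equal. apply hs_meetC.
  - intros x1 x2 a1 a2 Hx1 Hx2 Ha1 Ha2.
    rewrite imp_meetr, !imp_meetl.
    rewrite (proj1 (centraliser_imp a1 a2 Ha2 x1 Hx1)).
    rewrite imp_swap, (proj2 (Ha1 _ (Ximp x1 x2 Hx1 Hx2))). reflexivity.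
  - intros x _. apply hs_meet1.
  - intros a _. rewrite hs_meetC. apply hs_meet1.
Qed.

Lemma huq_commute_sub_centraliser (Y : A -> Prop) :
  X hs_top -> Y hs_top -> huq_commute X Y -> forall a, Y a -> Z a.
Proof.
  intros X1 Y1 [phi [_ [_ [phi_imp [phi_x phi_y]]]]] a Ya x Hx. split.
  - pose proof (phi_imp x hs_top hs_top a Hx X1 Y1 Ya) as E.
    rewrite imp1, top_imp, phi_x, phi_y in E by assumption. congruence.
  - pose proof (phi_imp hs_top x a hs_top X1 Hx Ya Y1) as E.
    rewrite imp1, top_imp, phi_x, phi_y in E by assumption. congruence.
Qed.

Lemma centraliser_up_closed :
  (forall x y, X x -> hs_le x y -> X y) ->
  forall a b, Z a -> hs_le a b -> Z b.
Proof.
  intros Xup a b Ha Hab x Hx. split.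
  - set (x' := hs_imp (hs_imp x b) b).
    assert (Hx' : X x') by (apply (Xup x); [exact Hx | apply le_imp, modus_ponens]).
    assert (x'_top : x' = hs_top).
    { rewrite <- (proj2 (Ha x' Hx')).
      apply imp_eq_top. eapply le_trans; [exact Hab | apply le_imp_r]. }
    apply le_antisym; [apply imp_top_eq, x'_top | apply le_imp_r].
  - apply le_antisym; [| apply le_imp_r].
    rewrite <- (proj2 (Ha x Hx)) at 2. apply imp_le_antitone, Hab.
Qed.

End Centraliser.

Theorem mainTheorem18 (A : HSLat) (X : A -> Prop) :
  is_subobject X ->
  is_centraliser X (centraliser_set X) /\
  (is_filter X -> is_filter (centraliser_set X)).
Proof.
  intros [X1 [_ Ximp]]. split.
  - split; [apply centraliser_subobject |].
    split; [apply huq_commute_centraliser, Ximp |].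
    intros Y [Y1 _]. apply huq_commute_sub_centraliser; assumption.
  - intros [_ [_ Xup]].
    split; [exists hs_top; apply centraliser_top |].
    split; [apply centraliser_meet | apply centraliser_up_closed, Xup].
Qed.
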